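(* Let $G$ be a finite group, let $T$ be a $G$-Tambara functor, and let $k$ be an integer (viewed as an element of each ring $T(G/H)$ via the unique ring homomorphism $\mathbb{Z} \to T(G/H)$). The following are equivalent: (1) $k$ is a unit in $T(G/G)$; (2) $k$ is a unit in $T(G/H)$ for every subgroup $H \leq G$; (3) $k$ is a unit in $T(G/e)$, where $e$ is the trivial subgroup.
   Context: For a finite group $G$, a $G$-Tambara functor $T$ (in the sense of Tambara) consists of a commutative ring $T(G/H)$ for each subgroup $H \leq G$, together with, for each inclusion $H \leq K$ of subgroups, a ring homomorphism $\mathrm{res}^K_H : T(G/K) \to T(G/H)$ (restriction), an additive group homomorphism $\mathrm{tr}^K_H : T(G/H) \to T(G/K)$ (transfer), and a multiplicative monoid homomorphism $\mathrm{nm}^K_H : T(G/H) \to T(G/K)$ (norm), and, for each $g \in G$ and $H \leq G$, a ring isomorphism $c_{g,H} : T(G/H) \to T(G/gHg^{-1})$ (conjugation), satisfying the standard Tambara functor axioms (equivalently, $T$ is a product-preserving functor from Tambara's category of bispans of finite $G$-sets to sets, with $T(G/H)$ its value on the orbit $G/H$). *)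

From HB Require Import structures.
From mathcomp Require Import all_boot all_order all_algebra all_fingroup.
Set Implicit Arguments. Unset Strict Implicit. Unset Printing Implicit Defensive.
Import GRing.Theory.
Local Open Scope ring_scope.

Section Tambara.
Variable gT : finGroupType.
(* The finite group G is the whole type gT, G = [set: gT];
   its subgroups are the {group gT}. *)

(* cj H g = g H g^-1   (MathComp's H :^ x is x^-1 H x) *)
Definition cj (H : {group gT}) (g : gT) : {group gT} := (H :^ g^-1)%G.
Definition meet (J H : {group gT}) : {group gT} := (J :&: H)%G.

Definition dcoset (J H : {set gT}) (g : gT) : {set gT} := (J :* g * H)%g.
Definition dreps (J H K R : {set gT}) : Prop :=
  R \subset K /\
  forall x, x \in K -> #|[set g in R | x \in dcoset J H g]| = 1%N.

(* stabiliser in K of a subset S of gT under left translation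
   (generated group of the stabiliser set, which is already a group) *)
Definition stab (K : {group gT}) (S : {set gT}) : {group gT} :=
  <<[set k in K | lcoset S k == S]>>%G.

Definition orbit_reps (K : {group gT}) (P : {set gT} -> Prop)
    (F : {set {set gT}}) : Prop :=
  (forall S, S \in F -> P S) /\
  forall S', P S' -> #|[set S in F | [exists k in K, S' == lcoset S k]]| = 1%N.

(* subsets S of K that are unions of left H-cosets: functions K/H -> bool
   (gH |-> (g \in S)) *)
Definition subsetKH (H K : {group gT}) (S : {set gT}) : Prop :=
  S \subset K /\ (S * H \subset S)%g.

(* subsets S of K encoding sections s : K/H -> K/L of the projection K/L -> K/H
   (for L <= H <= K): S is the union of the cosets s(kH) *)
Definition sectionKHL (L H K : {group gT}) (S : {set gT}) : Prop :=
  S \subset K /\ (S * L \subset S)%g /\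
  forall k, k \in K -> exists x, S :&: lcoset H k = lcoset L x.

(* an element g' with s(gH) = g' L *)
Definition secpt (H : {group gT}) (S : {set gT}) (g : gT) : gT :=
  odflt g [pick x in S :&: lcoset H g].

Definition ring_hom (R S : pzRingType) (f : R -> S) : Prop :=
  f 1 = 1 /\ (forall x y, f (x + y) = f x + f y) /\
  (forall x y, f (x * y) = f x * f y).

Record tambara_data := TambaraData {
  TT : {group gT} -> comPzRingType;           (* H |-> T(G/H) *)
  res : forall H K : {group gT}, TT K -> TT H;  (* res^K_H  (meaningful for H <= K) *)
  tr  : forall H K : {group gT}, TT H -> TT K;
  nm  : forall H K : {group gT}, TT H -> TT K;
  conj : forall (g : gT) (H K : {group gT}), TT H -> TT K
    (* c_{g,H} : T(G/H) -> T(G/gHg^-1)  (meaningful for K = g H g^-1) *)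
}.
Arguments res : clear implicits.
Arguments tr : clear implicits.
Arguments nm : clear implicits.
Arguments conj : clear implicits.

Record tambara_axioms (T : tambara_data) : Prop := TambaraAxioms {
  res_id : forall H (x : TT T H), res T H H x = x;
  tr_id : forall H (x : TT T H), tr T H H x = x;
  nm_id : forall H (x : TT T H), nm T H H x = x;
  res_comp : forall (J H K : {group gT}) (x : TT T K), J \subset H -> H \subset K ->
    res T J H (res T H K x) = res T J K x;
  tr_comp : forall (J H K : {group gT}) (x : TT T J), J \subset H -> H \subset K ->
    tr T H K (tr T J H x) = tr T J K x;
  nm_comp : forall (J H K : {group gT}) (x : TT T J), J \subset H -> H \subset K ->
    nm T H K (nm T J H x) = nm T J K x;
  conj_inner : forall (H : {group gT}) g (x : TT T H), g \in H -> conj T g H H x = x;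
  conj_comp : forall g h (H K M : {group gT}) (x : TT T H),
    K = cj H h -> M = cj K g ->
    conj T g K M (conj T h H K x) = conj T (g * h)%g H M x;
  conj_ring : forall g (H K : {group gT}), K = cj H g -> ring_hom (conj T g H K);
  res_ring : forall (H K : {group gT}), H \subset K -> ring_hom (res T H K);
  tr_add : forall (H K : {group gT}) (x y : TT T H), H \subset K ->
    tr T H K (x + y) = tr T H K x + tr T H K y;
  nm_one : forall (H K : {group gT}), H \subset K -> nm T H K 1 = 1;
  nm_mul : forall (H K : {group gT}) (x y : TT T H), H \subset K ->
    nm T H K (x * y) = nm T H K x * nm T H K y;
  nm_zero : forall (H K : {group gT}), H \subset K -> nm T H K 0 = 0;
  conj_res : forall g (J H J' H' : {group gT}) (x : TT T H), J \subset H ->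
    H' = cj H g -> J' = cj J g ->
    conj T g J J' (res T J H x) = res T J' H' (conj T g H H' x);
  conj_tr : forall g (J H J' H' : {group gT}) (x : TT T J), J \subset H ->
    H' = cj H g -> J' = cj J g ->
    conj T g H H' (tr T J H x) = tr T J' H' (conj T g J J' x);
  conj_nm : forall g (J H J' H' : {group gT}) (x : TT T J), J \subset H ->
    H' = cj H g -> J' = cj J g ->
    conj T g H H' (nm T J H x) = nm T J' H' (conj T g J J' x);
  mackey_tr : forall (J H K : {group gT}) (R : {set gT}) (x : TT T H),
    J \subset K -> H \subset K -> dreps J H K R ->
    res T J K (tr T H K x) =
    \sum_(g in R) tr T (meet J (cj H g)) J
        (res T (meet J (cj H g)) (cj H g) (conj T g H (cj H g) x));
  mackey_nm : forall (J H K : {group gT}) (R : {set gT}) (x : TT T H),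
    J \subset K -> H \subset K -> dreps J H K R ->
    res T J K (nm T H K x) =
    \prod_(g in R) nm T (meet J (cj H g)) J
        (res T (meet J (cj H g)) (cj H g) (conj T g H (cj H g) x));
  frobenius : forall (H K : {group gT}) (a : TT T H) (b : TT T K), H \subset K ->
    tr T H K a * b = tr T H K (a * res T H K b);
  nm_add : forall (H K : {group gT}) (a b : TT T H)
      (F : {set {set gT}}) (R : {set gT} -> {set gT}),
    H \subset K -> orbit_reps K (subsetKH H K) F ->
    (forall S, S \in F -> dreps (stab K S) H K (R S)) ->
    nm T H K (a + b) =
    \sum_(S in F) tr T (stab K S) K
      (\prod_(g in R S) nm T (meet (stab K S) (cj H g)) (stab K S)
         (res T (meet (stab K S) (cj H g)) (cj H g)
            (conj T g H (cj H g) (if g \in S then b else a))));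
  nm_tr : forall (L H K : {group gT}) (a : TT T L)
      (F : {set {set gT}}) (R : {set gT} -> {set gT}),
    L \subset H -> H \subset K -> orbit_reps K (sectionKHL L H K) F ->
    (forall S, S \in F -> dreps (stab K S) H K (R S)) ->
    nm T H K (tr T L H a) =
    \sum_(S in F) tr T (stab K S) K
      (\prod_(g in R S) nm T (meet (stab K S) (cj H g)) (stab K S)
         (res T (meet (stab K S) (cj H g)) (cj L (secpt H S g))
            (conj T (secpt H S g) L (cj L (secpt H S g)) a)))
}.

Record tambara := Tambara {
  tdata :> tambara_data;
  taxioms : tambara_axioms tdata
}.

End Tambara.

Definition is_unit (R : pzRingType) (x : R) : Prop := exists y : R, (x * y = 1)%R.

From mathcomp Require Import all_boot all_order all_algebra all_fingroup.
Set Implicit Arguments. Unset Strict Implicit. Unset Printing Implicit Defensive.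
Import GRing.Theory.

(* Restriction is a ring map, so units restrict: (1) -> (2) -> (3).  For
   (3) -> (1) reduce to k = n a natural number and induct on |K|.  If n is
   invertible in T(G/L) for every L < K, Frobenius reciprocity makes every
   transfer tr_L^K c a multiple of n.  In Tambara's formula for nm_e^K (m + 1),
   indexed by the K-orbits of subsets of K, the fixed subsets set0 and K
   contribute nm_e^K m and 1, and all other orbits have proper stabilisers and
   contribute transfers.  Hence nm_e^K n = n (1 + z), and as nm_e^K is
   multiplicative, nm_e^K n is a unit, so n is one too. *)

Lemma preim_transversalP (T : finType) (rT : eqType) (f : T -> rT) (D : {set T}) :
  let X := transversal (preim_partition f D) D in
  X \subset D /\ {in D, forall y, #|[set x in X | f y == f x]| = 1%N}.
Proof.
move=> X; have partP := preim_partitionP f D.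
have /and3P[_ sXD /forall_inP oneX] := transversalP partP.
split=> // y Dy.
have Py : pblock (preim_partition f D) y \in preim_partition f D.
  by rewrite pblock_mem // (cover_partition partP).
rewrite -(eqP (oneX _ Py)); apply: eq_card => x; rewrite !inE.
apply: andb_id2l => Xx; rewrite pblock_equivalence_partition ?(subsetP sXD x Xx) //.
by move=> ? ? ? _ _ _; split=> // /eqP->.
Qed.

Section Cosets.
Variable gT : finGroupType.
Implicit Types (J H K : {group gT}) (S : {set gT}).
Local Open Scope group_scope.

Lemma mem_dcoset J H g x : (x \in dcoset J H g) = (dcoset J H x == dcoset J H g).
Proof.
apply/idP/eqP => [/mulsgP[y h /rcosetP[j Jj ->] Hh ->] | <-].
  by rewrite /dcoset !rcosetM rcoset_id // -mulgA lcoset_id.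
by rewrite /dcoset -{1}[x]mulg1 mem_mulg ?rcoset_refl.
Qed.

Definition dcoset_reps J H K := transversal (preim_partition (dcoset J H) K) K.

Lemma dreps_dcoset_reps J H K : dreps J H K (dcoset_reps J H K).
Proof.
have [sRK oneR] := preim_transversalP (dcoset J H) K.
split=> // x Kx; rewrite -(oneR x Kx); apply: eq_card => g.
by rewrite !inE mem_dcoset.
Qed.

Lemma dreps_card1 K R : dreps K 1%G K R -> #|R| = 1%N.
Proof.
case=> sRK /(_ 1%g (group1 K)) <-; apply: eq_card => g; rewrite inE.
case Rg: (g \in R); rewrite //= mem_dcoset /dcoset !mulg1.
by rewrite !rcoset_id ?group1 ?(subsetP sRK) ?eqxx.
Qed.

Lemma mem_lcoset_orbit K S S' :
  [exists k in K, S' == lcoset S k] = (lcosets S' K == lcosets S K).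
Proof.
apply/exists_inP/eqP => [[k Kk /eqP->] | eqSS'].
  rewrite /lcosets -[in RHS](rcoset_id Kk) -rcosetE -imset_comp.
  by apply: eq_imset => x /=; rewrite !lcosetE lcosetM.
have /lcosetsP[k Kk ->] : S' \in lcosets S K.
  by rewrite -eqSS'; apply/lcosetsP; exists 1; rewrite ?lcoset1.
by exists k; rewrite ?lcosetE.
Qed.

Lemma orbit_reps_subsetKH H K : exists F, orbit_reps K (subsetKH H K) F.
Proof.
pose D := [set S : {set gT} | (S \subset K) && (S * H \subset S)].
have [sFD oneF] := preim_transversalP (lcosets^~ K) D.
exists (transversal (preim_partition (lcosets^~ K) D) D); split.
  by move=> S /(subsetP sFD); rewrite inE => /andP.
move=> S' [SK' SH']; rewrite -(oneF S') ?inE ?SK' //; apply: eq_card => S.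
by rewrite !inE mem_lcoset_orbit.
Qed.

Lemma orbit_reps_fixed K (P : {set gT} -> Prop) F S :
  orbit_reps K P F -> P S -> {in K, forall k, lcoset S k = S} -> S \in F.
Proof.
case=> _ /(_ S) oneF PS fixS; have /eqP/cards1P[S0 defS0] := oneF PS.
have : S0 \in [set S1 in F | [exists k in K, S == lcoset S1 k]] by rewrite defS0 set11.
case/setIdP=> FS0 /exists_inP[k Kk /eqP defS].
suff -> : S = S0 by [].
by rewrite -(fixS k^-1) ?groupV // defS !lcosetE -lcosetM mulVg lcoset1.
Qed.

Lemma stab_sub K S : stab K S \subset K.
Proof. by rewrite gen_subG; apply/subsetP => k; rewrite inE => /andP[]. Qed.

Lemma lcoset_stab K S k : k \in stab K S -> lcoset S k = S.
Proof.
have fixS_group : group_set [set x | lcoset S x == S].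
  apply/group_setP; split=> [|x y]; rewrite !inE ?lcosetE ?lcoset1 //.
  by move=> /eqP fx /eqP fy; rewrite lcosetM fy fx.
suff /subsetP/(_ k) : stab K S \subset Group fixS_group by rewrite inE => /[apply]/eqP.
by rewrite gen_subG; apply/subsetP => x; rewrite !inE => /andP[].
Qed.

Lemma stab_fixed K S : {in K, forall k, lcoset S k = S} -> stab K S = K.
Proof.
move=> fixS; apply/val_inj/eqP; rewrite eqEsubset stab_sub /=.
by apply: sub_gen; apply/subsetP => k Kk; rewrite inE Kk fixS ?eqxx.
Qed.

Lemma stab_proper K S : S != set0 -> S \proper K -> stab K S \proper K.
Proof.
case/set0Pn=> s Ss /andP[sSK not_sKS]; rewrite properE stab_sub.
apply: contra not_sKS => sKstab; apply/subsetP => x Kx.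
have Ks : s \in K := subsetP sSK s Ss.
have /lcoset_stab fixS : x * s^-1 \in stab K S by rewrite (subsetP sKstab) ?groupM ?groupV.
by rewrite -fixS lcosetE mem_lcoset invMg invgK -mulgA mulVg mulg1.
Qed.

Lemma lcoset0 k : lcoset set0 k = set0 :> {set gT}.
Proof. by rewrite /lcoset imset0. Qed.

Lemma meet_cj1 (X : {group gT}) g : meet X (cj 1%G g) = 1%G.
Proof. by apply: val_inj; rewrite /= conjs1g setIg1. Qed.

End Cosets.

Local Open Scope ring_scope.

Section RingHom.
Variables (R S : pzRingType) (f : R -> S).
Hypothesis fM : ring_hom f.

Lemma ring_hom0 : f 0 = 0.
Proof.
by have [_ [fD _]] := fM; apply: (@addrI _ (f 0)); rewrite -fD !addr0.
Qed.

Lemma ring_hom_nat n : f n%:R = n%:R.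
Proof.
have [f1 [fD _]] := fM.
by elim: n => [|n IHn]; rewrite ?ring_hom0 // !mulrS fD f1 IHn.
Qed.

Lemma ring_hom_unit x : is_unit x -> is_unit (f x).
Proof. by have [f1 [_ fMul]] := fM; case=> y xy; exists (f y); rewrite -fMul xy f1. Qed.

End RingHom.

Lemma is_unitN (R : pzRingType) (x : R) : is_unit (- x) <-> is_unit x.
Proof. by split=> -[y xy]; exists (- y); rewrite ?mulrNN // -mulrNN opprK. Qed.

Lemma is_unit_intr_abs (R : pzRingType) (k : int) :
  is_unit (k%:~R : R) <-> is_unit ((`|k|%N)%:R : R).
Proof. by case: k => n //=; rewrite NegzE mulrNz; apply: is_unitN. Qed.

Section TambaraUnits.
Variables (gT : finGroupType) (T : tambara gT).
Local Notation ax := (taxioms T).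
Local Notation resT H K := (@res gT T H K).
Local Notation trT H K := (@tr gT T H K).
Local Notation nmT H K := (@nm gT T H K).
Local Notation conjT g H K := (@conj gT T g H K).

Lemma tr_res_inv (L K : {group gT}) (x : TT T K) (w c : TT T L) :
  L \subset K -> resT L K x * w = 1 -> trT L K c = x * trT L K (c * w).
Proof. by move=> sLK xw1; rewrite mulrC (frobenius ax) // -mulrA (mulrC w) xw1 mulr1. Qed.

Lemma nm_res_conj1_nat (K : {group gT}) g (c : nat) :
  nmT (meet K (cj 1%G g)) K
     (resT (meet K (cj 1%G g)) (cj 1%G g) (conjT g 1%G (cj 1%G g) c%:R))
  = nmT 1%G K c%:R.
Proof.
rewrite (ring_hom_nat (conj_ring ax (erefl _))).
by rewrite (ring_hom_nat (res_ring ax (subsetIr _ _))) -/(meet K _) meet_cj1.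
Qed.

Lemma nm1_nat_congr (K : {group gT}) (I : TT T K -> Prop) :
    I 0 -> (forall x y, I x -> I y -> I (x + y)) ->
    (forall (L : {group gT}) c, L \proper K -> I (trT L K c)) ->
  forall m : nat, exists2 y, I y & nmT 1%G K m%:R = m%:R + y.
Proof.
move=> I0 ID Itr; elim=> [|m [y Iy nm_m]].
  by exists 0 => //; rewrite mulr0n addr0 (nm_zero ax) ?sub1G.
have [F Freps] := orbit_reps_subsetKH 1%G K.
have dR S : S \in F -> dreps (stab K S) 1%G K (dcoset_reps (stab K S) 1%G K).
  by move=> _; apply: dreps_dcoset_reps.
have fix0 : {in K, forall k, lcoset set0 k = set0} by move=> k _; apply: lcoset0.
have fixK : {in K, forall k, lcoset K k = K} by move=> k Kk; rewrite lcosetE lcoset_id.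
have F0 : set0 \in F.
  by apply: orbit_reps_fixed Freps _ fix0; split; rewrite ?sub0set ?mul0g.
have FK : gval K \in F.
  by apply: orbit_reps_fixed Freps _ fixK; split; rewrite ?mulg1.
have K0 : gval K != set0 by apply/set0Pn; exists 1%g.
rewrite -addn1 natrD (nm_add ax _ _ (sub1G K) Freps dR).
rewrite (bigD1 set0) //= (bigD1 (gval K)) /=; last by rewrite FK K0.
rewrite (stab_fixed fix0) (stab_fixed fixK) !(tr_id ax).
under eq_bigr => g _ do rewrite in_set0 nm_res_conj1_nat.
rewrite prodr_const (dreps_card1 (dreps_dcoset_reps _ _ _)) expr1.
rewrite big1 => [|g Rg]; last first.
  rewrite ifT ?nm_res_conj1_nat ?mulr1n ?(nm_one ax) ?sub1G //.
  by case: (dreps_dcoset_reps K 1%G K) => /subsetP->.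
set rest := \sum_(S | _) _; have Irest : I rest.
  apply: big_ind => // S /andP[/andP[FS S0] SK]; apply/Itr/stab_proper => //.
  by have [sSK _] := Freps.1 S FS; rewrite properEneq SK.
by exists (y + rest); [apply: ID | rewrite nm_m natrD -!addrA (addrCA y)].
Qed.

Lemma is_unit_nat_lift (n : nat) (K : {group gT}) :
  is_unit (n%:R : TT T 1%G) -> is_unit (n%:R : TT T K).
Proof.
move=> [v nv]; elim: {K}_.+1 {-2}K (ltnSn #|K|) => // N IHN K ltKN.
pose I (x : TT T K) := exists y, x = n%:R * y.
have [|||y [z ->] nm_n] := @nm1_nat_congr K I _ _ _ n.
- by exists 0; rewrite mulr0.
- by move=> _ _ [a ->] [b ->]; exists (a + b); rewrite mulrDr.
- move=> L c ltLK; have [w nw] := IHN L (leq_trans (proper_card ltLK) ltKN).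
  exists (trT L K (c * w)); apply: tr_res_inv (proper_sub ltLK) _.
  by rewrite (ring_hom_nat (res_ring ax (proper_sub ltLK))).
have nm_nv : nmT 1%G K n%:R * nmT 1%G K v = 1.
  by rewrite -(nm_mul ax) ?sub1G // nv (nm_one ax) ?sub1G.
by exists ((1 + z) * nmT 1%G K v); rewrite mulrA mulrDr mulr1 -nm_n.
Qed.

End TambaraUnits.

Theorem mainTheorem1 (gT : finGroupType) (T : tambara gT) (k : int) :
  [<-> is_unit (k%:~R : TT T [set: gT]%G);
       forall H : {group gT}, is_unit (k%:~R : TT T H);
       is_unit (k%:~R : TT T 1%G)].
Proof.
tfae=> [unitG H | unitH | unit1].
- have resM := res_ring (taxioms T) (subsetT H).
  apply/is_unit_intr_abs; rewrite -(ring_hom_nat resM).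
  exact/(ring_hom_unit resM)/is_unit_intr_abs.
- exact: unitH.
- by apply/is_unit_intr_abs/is_unit_nat_lift/is_unit_intr_abs.
Qed.
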